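(* Let $\mathscr{B}$ be a tensored and cotensored $\mathscr{V}$-category whose underlying ordinary category is finitely well-complete. Then $(\mathsf{Epi}_\mathscr{V}\mathscr{B},\mathsf{StrMono}_\mathscr{V}\mathscr{B})=(\mathsf{Epi}\,\mathscr{B},\mathsf{StrMono}\,\mathscr{B})$, and this pair is a $\mathscr{V}$-factorization-system on $\mathscr{B}$.
   Context: $\mathscr{V}$ is a closed symmetric monoidal category; ordinary categories are not assumed locally small. $\mathsf{Epi}_\mathscr{V}\mathscr{B}$: morphisms $e$ with $\mathscr{B}(e,C)$ mono in $\mathscr{V}$ for all $C$; $\mathscr{V}$-monos: $m$ with $\mathscr{B}(A,m)$ mono for all $A$. For $e:A_1\to A_2$, $m:B_1\to B_2$, $e\downarrow_\mathscr{V} m$ means the square formed by $\mathscr{B}(A_2,m)$, $\mathscr{B}(A_1,m)$, $\mathscr{B}(e,B_1)$, $\mathscr{B}(e,B_2)$ is a pullback in $\mathscr{V}$. $\mathsf{StrMono}_\mathscr{V}\mathscr{B}$: $\mathscr{V}$-monos $m$ with $e\downarrow_\mathscr{V} m$ for all $\mathscr{V}$-epis $e$. $\mathsf{Epi}\,\mathscr{B}$, $\mathsf{StrMono}\,\mathscr{B}$: ordinary epis and strong monos (monos with unique diagonal lifts against all epis). An ordinary category is finitely well-complete if it has finite limits and intersections (wide pullbacks) of arbitrary class-indexed families of strong monos. A $\mathscr{V}$-factorization-system is a pair $(\mathscr{E},\mathscr{M})$ such that $\mathscr{M}$ is exactly the class of $m$ with $e\downarrow_\mathscr{V} m$ for all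 $e\in\mathscr{E}$, $\mathscr{E}$ exactly the class of $e$ with $e\downarrow_\mathscr{V} m$ for all $m\in\mathscr{M}$, and every morphism is assigned a factorization $m\cdot e$ with $e\in\mathscr{E}$, $m\in\mathscr{M}$. *)

Set Implicit Arguments.

Record PreCat := {
  ob :> Type;
  hom : ob -> ob -> Type;
  idm : forall a, hom a a;
  cmp : forall a b c, hom b c -> hom a b -> hom a c
}.
Arguments hom {_} a b.
Arguments idm {_} a.
Arguments cmp {_ a b c} g f.
Notation "g ∘ f" := (cmp g f) (at level 40, left associativity).

Definition is_category (C : PreCat) : Prop :=
  (forall (a b : C) (f : hom a b), idm b ∘ f = f) /\
  (forall (a b : C) (f : hom a b), f ∘ idm a = f) /\
  (forall (a b c d : C) (f : hom a b) (g : hom b c) (h : hom c d),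
      h ∘ (g ∘ f) = (h ∘ g) ∘ f).

Section Notions.
Variable C : PreCat.

Definition is_mono {a b : C} (f : hom a b) : Prop :=
  forall (z : C) (g h : hom z a), f ∘ g = f ∘ h -> g = h.

Definition is_epi {a b : C} (f : hom a b) : Prop :=
  forall (z : C) (g h : hom b z), g ∘ f = h ∘ f -> g = h.

Definition is_iso {a b : C} (f : hom a b) : Prop :=
  exists g : hom b a, g ∘ f = idm a /\ f ∘ g = idm b.

Definition is_strong_mono {a b : C} (m : hom a b) : Prop :=
  is_mono m /\
  forall (x y : C) (e : hom x y), is_epi e ->
  forall (u : hom x a) (v : hom y b), m ∘ u = v ∘ e ->
  exists! d : hom y a, d ∘ e = u /\ m ∘ d = v.

Definition is_pullback {x y z p : C} (f : hom x z) (g : hom y z)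
    (p1 : hom p x) (p2 : hom p y) : Prop :=
  f ∘ p1 = g ∘ p2 /\
  forall (q : C) (q1 : hom q x) (q2 : hom q y), f ∘ q1 = g ∘ q2 ->
  exists! u : hom q p, p1 ∘ u = q1 /\ p2 ∘ u = q2.

Definition is_terminal (t : C) : Prop :=
  forall a : C, exists! f : hom a t, True.

Definition has_pullbacks : Prop :=
  forall (x y z : C) (f : hom x z) (g : hom y z),
  exists (p : C) (p1 : hom p x) (p2 : hom p y), is_pullback f g p1 p2.

Definition has_finite_limits : Prop :=
  (exists t : C, is_terminal t) /\ has_pullbacks.

Definition is_intersection {I : Type} {a : C} (b : I -> C)
    (m : forall i, hom (b i) a) (p : C) (pa : hom p a)
    (pi : forall i, hom p (b i)) : Prop :=
  (forall i, m i ∘ pi i = pa) /\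
  forall (q : C) (qa : hom q a) (qi : forall i, hom q (b i)),
    (forall i, m i ∘ qi i = qa) ->
    exists! u : hom q p, pa ∘ u = qa /\ forall i, pi i ∘ u = qi i.

Definition has_strong_mono_intersections : Prop :=
  forall (I : Type) (a : C) (b : I -> C) (m : forall i, hom (b i) a),
    (forall i, is_strong_mono (m i)) ->
    exists (p : C) (pa : hom p a) (pi : forall i, hom p (b i)),
      @is_intersection I a b m p pa pi.

Definition finitely_well_complete : Prop :=
  has_finite_limits /\ has_strong_mono_intersections.

End Notions.
Arguments is_mono {C a b} f.
Arguments is_epi {C a b} f.
Arguments is_iso {C a b} f.
Arguments is_strong_mono {C a b} m.
Arguments is_pullback {C x y z p} f g p1 p2.

Record SMCC := {
  V :> PreCat;
  V_cat : is_category V;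
  tens : V -> V -> V;
  tensm : forall a a' b b' : V, hom a a' -> hom b b' -> hom (tens a b) (tens a' b');
  tensm_id : forall a b : V, tensm _ _ _ _ (idm a) (idm b) = idm (tens a b);
  tensm_comp : forall (a a' a'' b b' b'' : V) (f : hom a a') (f' : hom a' a'')
      (g : hom b b') (g' : hom b' b''),
      tensm _ _ _ _ (f' ∘ f) (g' ∘ g) = tensm _ _ _ _ f' g' ∘ tensm _ _ _ _ f g;
  unit : V;
  asc : forall a b c : V, hom (tens (tens a b) c) (tens a (tens b c));
  asc_iso : forall a b c : V, is_iso (asc a b c);
  asc_nat : forall (a a' b b' c c' : V) (f : hom a a') (g : hom b b') (h : hom c c'),
      asc a' b' c' ∘ tensm _ _ _ _ (tensm _ _ _ _ f g) h = tensm _ _ _ _ f (tensm _ _ _ _ g h) ∘ asc a b c;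
  lu : forall a : V, hom (tens unit a) a;
  lu_inv : forall a : V, hom a (tens unit a);
  lu_inv_l : forall a : V, lu_inv a ∘ lu a = idm (tens unit a);
  lu_inv_r : forall a : V, lu a ∘ lu_inv a = idm a;
  lu_nat : forall (a b : V) (f : hom a b), f ∘ lu a = lu b ∘ tensm _ _ _ _ (idm unit) f;
  ru : forall a : V, hom (tens a unit) a;
  ru_inv : forall a : V, hom a (tens a unit);
  ru_inv_l : forall a : V, ru_inv a ∘ ru a = idm (tens a unit);
  ru_inv_r : forall a : V, ru a ∘ ru_inv a = idm a;
  ru_nat : forall (a b : V) (f : hom a b), f ∘ ru a = ru b ∘ tensm _ _ _ _ f (idm unit);
  triangle : forall a b : V,
      tensm _ _ _ _ (ru a) (idm b) = tensm _ _ _ _ (idm a) (lu b) ∘ asc a unit b;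
  pentagon : forall a b c d : V,
      asc a b (tens c d) ∘ asc (tens a b) c d
      = tensm _ _ _ _ (idm a) (asc b c d) ∘ asc a (tens b c) d ∘ tensm _ _ _ _ (asc a b c) (idm d);
  sym : forall a b : V, hom (tens a b) (tens b a);
  sym_nat : forall (a a' b b' : V) (f : hom a a') (g : hom b b'),
      sym a' b' ∘ tensm _ _ _ _ f g = tensm _ _ _ _ g f ∘ sym a b;
  sym_invol : forall a b : V, sym b a ∘ sym a b = idm (tens a b);
  hexagon : forall a b c : V,
      asc b c a ∘ sym a (tens b c) ∘ asc a b c
      = tensm _ _ _ _ (idm b) (sym a c) ∘ asc b a c ∘ tensm _ _ _ _ (sym a b) (idm c);
  ihom : V -> V -> V;
  ev : forall y z : V, hom (tens (ihom y z) y) z;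
  curry : forall x y z : V, hom (tens x y) z -> hom x (ihom y z);
  curry_ev : forall (x y z : V) (f : hom (tens x y) z),
      ev y z ∘ tensm _ _ _ _ (curry _ _ _ f) (idm y) = f;
  curry_uniq : forall (x y z : V) (f : hom (tens x y) z) (g : hom x (ihom y z)),
      ev y z ∘ tensm _ _ _ _ g (idm y) = f -> g = curry _ _ _ f
}.
Arguments tens {_} a b.
Arguments tensm {_ a a' b b'} f g.
Arguments unit {_}.
Arguments asc {_} a b c.
Arguments lu {_} a.
Arguments lu_inv {_} a.
Arguments ru {_} a.
Arguments ru_inv {_} a.
Arguments sym {_} a b.
Arguments ihom {_} y z.
Arguments ev {_} y z.
Arguments curry {_ x y z} f.

Record VCat (W : SMCC) := {
  vob :> Type;
  vhom : vob -> vob -> ob W;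
  vcomp : forall a b c : vob, hom (tens (vhom b c) (vhom a b)) (vhom a c);
  vid : forall a : vob, hom unit (vhom a a);
  vassoc : forall a b c d : vob,
      vcomp a b d ∘ tensm (vcomp b c d) (idm (vhom a b))
      = vcomp a c d ∘ tensm (idm (vhom c d)) (vcomp a b c)
        ∘ asc (vhom c d) (vhom b c) (vhom a b);
  vunit_l : forall a b : vob,
      vcomp a b b ∘ tensm (vid b) (idm (vhom a b)) = lu (vhom a b);
  vunit_r : forall a b : vob,
      vcomp a a b ∘ tensm (idm (vhom a b)) (vid a) = ru (vhom a b)
}.
Arguments vhom {_} _ a b.
Arguments vcomp {_} _ a b c.
Arguments vid {_} _ a.

Section Enriched.
Variables (W : SMCC) (B : VCat W).

Definition B0 : PreCat := {|
  ob := vob B;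
  hom a b := hom (unit : ob W) (vhom B a b);
  idm a := vid B a;
  cmp a b c g f := vcomp B a b c ∘ tensm g f ∘ lu_inv (unit : ob W)
|}.

Definition precomp {a1 a2 : vob B} (e : @hom B0 a1 a2) (c : vob B)
  : hom (vhom B a2 c) (vhom B a1 c) :=
  vcomp B a1 a2 c ∘ tensm (idm (vhom B a2 c)) e ∘ ru_inv (vhom B a2 c).

Definition postcomp (a : vob B) {b1 b2 : vob B} (m : @hom B0 b1 b2)
  : hom (vhom B a b1) (vhom B a b2) :=
  vcomp B a b1 b2 ∘ tensm m (idm (vhom B a b1)) ∘ lu_inv (vhom B a b1).

Definition orthV {a1 a2 b1 b2 : vob B} (e : @hom B0 a1 a2) (m : @hom B0 b1 b2)
  : Prop :=
  is_pullback (precomp e b2) (postcomp a1 m) (postcomp a2 m) (precomp e b1).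

Definition MorClass := forall a b : vob B, @hom B0 a b -> Prop.

Definition VEpi : MorClass :=
  fun a b e => forall c : vob B, is_mono (precomp e c).

Definition VMono : MorClass :=
  fun b1 b2 m => forall a : vob B, is_mono (postcomp a m).

Definition VStrMono : MorClass :=
  fun b1 b2 m => VMono b1 b2 m /\
    forall (a1 a2 : vob B) (e : @hom B0 a1 a2), VEpi a1 a2 e -> orthV e m.

Definition Epi0 : MorClass := fun a b f => @is_epi B0 a b f.
Definition StrMono0 : MorClass := fun a b f => @is_strong_mono B0 a b f.

Definition VFactSystem (E M : MorClass) : Prop :=
  (forall (b1 b2 : vob B) (m : @hom B0 b1 b2),
      M b1 b2 m <-> forall (a1 a2 : vob B) (e : @hom B0 a1 a2), E a1 a2 e -> orthV e m) /\
  (forall (a1 a2 : vob B) (e : @hom B0 a1 a2),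
      E a1 a2 e <-> forall (b1 b2 : vob B) (m : @hom B0 b1 b2), M b1 b2 m -> orthV e m) /\
  (forall (a b : vob B) (f : @hom B0 a b),
      exists (c : vob B) (e : @hom B0 a c) (m : @hom B0 c b),
        E a c e /\ M c b m /\ f = m ∘ e).

(* tensor X ⊗ A given by a unit eta : X -> B(A, X⊗A) inducing isomorphisms
   B(X⊗A, C) ≅ [X, B(A, C)] *)
Definition is_tensor (x : ob W) (a t : vob B) (eta : hom x (vhom B a t)) : Prop :=
  forall c : vob B,
    is_iso (curry (vcomp B a t c ∘ tensm (idm (vhom B t c)) eta)).

(* cotensor [X, A] given by a counit eps : X -> B([X,A], A) inducing
   isomorphisms B(C, [X,A]) ≅ [X, B(C, A)] *)
Definition is_cotensor (x : ob W) (a k : vob B) (eps : hom x (vhom B k a)) : Prop :=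
  forall c : vob B,
    is_iso (curry (vcomp B c k a ∘ sym (vhom B c k) (vhom B k a)
                   ∘ tensm (idm (vhom B c k)) eps)).

Definition tensored : Prop :=
  forall (x : ob W) (a : vob B), exists (t : vob B) (eta : hom x (vhom B a t)),
    @is_tensor x a t eta.

Definition cotensored : Prop :=
  forall (x : ob W) (a : vob B), exists (k : vob B) (eps : hom x (vhom B k a)),
    @is_cotensor x a k eps.

End Enriched.

(* Tensors and cotensors let one transpose V-valued data into B0: a map X -> B(A, C)
   is a morphism X ⊗ A -> C, and a map X -> B(C, A) is a morphism C -> [X, A].
   Consequently B(e, C) is mono in V iff e is epi in B0, and B(A, m) is mono iff m is.
   For e a V-epi and m a strong mono, a cone over the square e ↓_V m with vertex X
   transposes to a square from X ⊗ e (again epi) to m, whose diagonal gives the unique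
   factorization; so the V-classes coincide with (Epi, StrongMono).  In a finitely
   well-complete category every f factors as an epi followed by the intersection of all
   strong monos through which f factors, which makes the pair a V-factorization system. *)

From Stdlib Require Import ChoiceFacts IndefiniteDescription.
Set Implicit Arguments.

(* Making [is_category] a class lets the associativity and unit lemmas below find the
   laws of both [W] and [B0 B] by instance resolution. *)
Existing Class is_category.

Arguments tensm_id {_} a b.
Arguments tensm_comp {_ a a' a'' b b' b''} f f' g g'.
Arguments asc_iso {_} a b c.
Arguments asc_nat {_ a a' b b' c c'} f g h.
Arguments lu_inv_l {_} a.
Arguments lu_inv_r {_} a.
Arguments lu_nat {_ a b} f.
Arguments ru_inv_l {_} a.
Arguments ru_inv_r {_} a.
Arguments ru_nat {_ a b} f.
Arguments triangle {_} a b.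
Arguments pentagon {_} a b c d.
Arguments sym_nat {_ a a' b b'} f g.
Arguments sym_invol {_} a b.
Arguments hexagon {_} a b c.
Arguments curry_ev {_ x y z} f.
Arguments curry_uniq {_ x y z} f g.

Section Category.
Context {C : PreCat} `{HC : is_category C}.

Lemma compA {a b c d : C} (f : hom a b) (g : hom b c) (h : hom c d) :
  h ∘ (g ∘ f) = h ∘ g ∘ f.
Proof. apply (proj2 (proj2 HC)). Qed.

Lemma id_comp {a b : C} (f : hom a b) : idm b ∘ f = f.
Proof. apply (proj1 HC). Qed.

Lemma comp_id {a b : C} (f : hom a b) : f ∘ idm a = f.
Proof. apply (proj1 (proj2 HC)). Qed.

Lemma comp_prefix2 {x y z : C} {a : hom y z} {b : hom x y} {c : hom x z} :
  a ∘ b = c -> forall w (k : hom w x), a ∘ (b ∘ k) = c ∘ k.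
Proof. intros E w k. rewrite compA, E. reflexivity. Qed.

Lemma comp_prefix3 {x y z u : C} {a : hom z u} {b : hom y z} {c : hom x y} {d : hom x u} :
  a ∘ (b ∘ c) = d -> forall w (k : hom w x), a ∘ (b ∘ (c ∘ k)) = d ∘ k.
Proof. intros E w k. rewrite (compA k c b), compA, E. reflexivity. Qed.

Lemma comp_prefix4 {x y z u v : C} {a : hom u v} {b : hom z u} {c : hom y z}
    {e : hom x y} {d : hom x v} :
  a ∘ (b ∘ (c ∘ e)) = d -> forall w (k : hom w x), a ∘ (b ∘ (c ∘ (e ∘ k))) = d ∘ k.
Proof. intros E w k. rewrite (compA k e c), (compA k (c ∘ e) b), compA, E. reflexivity. Qed.

Lemma iso_mono {a b : C} (f : hom a b) : is_iso f -> is_mono f.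
Proof.
  intros [g [gf _]] z x y E.
  rewrite <- (id_comp x), <- (id_comp y), <- gf, <- !compA, E. reflexivity.
Qed.

Lemma iso_epi {a b : C} (f : hom a b) : is_iso f -> is_epi f.
Proof.
  intros [g [_ fg]] z x y E.
  rewrite <- (comp_id x), <- (comp_id y), <- fg, !compA, E. reflexivity.
Qed.

Lemma id_iso (a : C) : is_iso (idm a).
Proof. exists (idm a). rewrite id_comp. split; reflexivity. Qed.

Lemma iso_comp {a b c : C} (f : hom a b) (g : hom b c) :
  is_iso f -> is_iso g -> is_iso (g ∘ f).
Proof.
  intros [f' [F1 F2]] [g' [G1 G2]]. exists (f' ∘ g'). split.
  - rewrite <- !compA, (compA f g g'), G1, id_comp. exact F1.
  - rewrite <- !compA, (compA g' f' f), F2, id_comp. exact G2.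
Qed.

Lemma strong_mono_intro {a b : C} (m : hom a b) : is_mono m ->
  (forall (x y : C) (e : hom x y), is_epi e -> forall u v, m ∘ u = v ∘ e ->
      exists d, d ∘ e = u /\ m ∘ d = v) -> is_strong_mono m.
Proof.
  intros Hm Hl. split; [exact Hm|]. intros x y e He u v H.
  destruct (Hl x y e He u v H) as [d [D1 D2]]. exists d. split; [split; assumption|].
  intros d' [D1' D2']. apply Hm. rewrite D2, D2'. reflexivity.
Qed.

Lemma mono_comp {a b c : C} (m2 : hom a b) (m1 : hom b c) :
  is_mono m1 -> is_mono m2 -> is_mono (m1 ∘ m2).
Proof. intros H1 H2 z g h H. rewrite <- !compA in H. apply H2, H1, H. Qed.

Lemma strong_mono_comp {a b c : C} (m2 : hom a b) (m1 : hom b c) :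
  is_strong_mono m1 -> is_strong_mono m2 -> is_strong_mono (m1 ∘ m2).
Proof.
  intros [H1 L1] [H2 L2]. apply strong_mono_intro; [apply mono_comp; assumption|].
  intros x y e He u v H. rewrite <- compA in H.
  destruct (L1 x y e He (m2 ∘ u) v H) as [d1 [[D11 D12] _]].
  destruct (L2 x y e He u d1 (eq_sym D11)) as [d2 [[D21 D22] _]].
  exists d2. split; [exact D21|]. rewrite <- compA, D22. exact D12.
Qed.

Definition unique_lifting {a1 a2 b1 b2 : C} (e : hom a1 a2) (m : hom b1 b2) : Prop :=
  forall (u : hom a1 b1) (v : hom a2 b2), m ∘ u = v ∘ e ->
  exists! d : hom a2 b1, d ∘ e = u /\ m ∘ d = v.

(* The kernel pair of [m] is split by the diagonal, so its projections are epi;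
   the lift in the square they form with [m] is then forced to be the identity. *)
Lemma mono_of_unique_lifting (Hpb : has_pullbacks C) {b1 b2 : C} (m : hom b1 b2) :
  (forall (x y : C) (e : hom x y), is_epi e -> unique_lifting e m) -> is_mono m.
Proof.
  intros Hl. destruct (Hpb _ _ _ m m) as [P [p1 [p2 [Hc Hu]]]].
  destruct (Hu b1 (idm b1) (idm b1) eq_refl) as [diag [[Diag1 Diag2] _]].
  assert (Hp1 : is_epi p1).
  { intros z g h H. rewrite <- (comp_id g), <- (comp_id h), <- Diag1, !compA, H.
    reflexivity. }
  destruct (Hl _ _ p1 Hp1 p2 m (eq_sym Hc)) as [d [[D1 D2] _]].
  assert (Hd : d = idm b1).
  { rewrite <- (comp_id d), <- Diag1 at 1. rewrite compA, D1. exact Diag2. }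
  intros z g h H. destruct (Hu z g h H) as [q [[Q1 Q2] _]].
  rewrite <- Q1, <- Q2, <- D1, Hd, id_comp. reflexivity.
Qed.

Lemma equalizer_exists (Hfl : has_finite_limits C) {p z : C} (g h : hom p z) :
  exists (E : C) (k : hom E p), g ∘ k = h ∘ k /\ is_mono k /\
    (forall Q (q : hom Q p), g ∘ q = h ∘ q -> exists u, k ∘ u = q).
Proof.
  destruct Hfl as [[t Ht] Hpb].
  assert (Tu : forall a (f1 f2 : hom a t), f1 = f2).
  { intros a f1 f2. destruct (Ht a) as [f0 [_ U]]. rewrite <- (U f1 I), <- (U f2 I).
    reflexivity. }
  destruct (Ht p) as [tp _]. destruct (Ht z) as [tz _].
  destruct (Hpb _ _ _ tp tz) as [P [pi1 [pi2 [_ HP]]]].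
  destruct (HP p (idm p) g (Tu _ _ _)) as [sg [[Sg1 Sg2] _]].
  destruct (HP p (idm p) h (Tu _ _ _)) as [sh [[Sh1 Sh2] _]].
  destruct (Hpb _ _ _ sg sh) as [E [k1 [k2 [Hk HE]]]].
  assert (Hk12 : k1 = k2).
  { rewrite <- (id_comp k1), <- (id_comp k2), <- Sg1 at 1. rewrite <- Sh1, <- !compA, Hk.
    reflexivity. }
  exists E, k1. split; [|split].
  - rewrite <- Sg2 at 1. rewrite <- Sh2, <- !compA, Hk, Hk12. reflexivity.
  - intros w x y H. destruct (HE w (k1 ∘ x) (k2 ∘ x)) as [u0 [_ U]].
    { rewrite !compA, Hk. reflexivity. }
    rewrite <- (U x), <- (U y); [reflexivity| |].
    + split; [symmetry; exact H|]. rewrite <- Hk12, H. reflexivity.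
    + split; reflexivity.
  - intros Q q Hq.
    assert (Hs : sg ∘ q = sh ∘ q).
    { destruct (HP Q q (g ∘ q) (Tu _ _ _)) as [s0 [_ U]].
      rewrite <- (U (sg ∘ q)), <- (U (sh ∘ q)); [reflexivity| |].
      - rewrite !compA, Sh1, Sh2, id_comp. split; [reflexivity|symmetry; exact Hq].
      - rewrite !compA, Sg1, Sg2, id_comp. split; reflexivity. }
    destruct (HE Q q q Hs) as [u [[U1 _] _]]. exists u. exact U1.
Qed.

Lemma equalizer_strong_mono {p z E : C} (g h : hom p z) (k : hom E p) :
  g ∘ k = h ∘ k -> is_mono k ->
  (forall Q (q : hom Q p), g ∘ q = h ∘ q -> exists u, k ∘ u = q) -> is_strong_mono k.
Proof.
  intros Hk Hm Hu. apply strong_mono_intro; [exact Hm|]. intros x y e He u v H.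
  assert (Hv : g ∘ v = h ∘ v).
  { apply He. rewrite <- !compA, <- H, !compA, Hk. reflexivity. }
  destruct (Hu _ v Hv) as [d Hd]. exists d. split; [|exact Hd].
  apply Hm. rewrite compA, Hd. symmetry. exact H.
Qed.

Lemma intersection_strong_mono {I : Type} {a : C} (b : I -> C) (m : forall i, hom (b i) a)
    (p : C) (pa : hom p a) (pi : forall i, hom p (b i)) :
  (forall i, is_strong_mono (m i)) -> @is_intersection C I a b m p pa pi -> is_strong_mono pa.
Proof.
  intros Hs [Hc Hu].
  assert (Hm : is_mono pa).
  { intros z x y H. destruct (Hu z (pa ∘ x) (fun i => pi i ∘ x)) as [u0 [_ U]].
    { intros i. rewrite compA, Hc. reflexivity. }
    rewrite <- (U x), <- (U y); [reflexivity| |].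
    - split; [symmetry; exact H|]. intros i. apply (proj1 (Hs i)).
      rewrite !compA, !Hc. symmetry. exact H.
    - split; [reflexivity|]. intros i. reflexivity. }
  apply strong_mono_intro; [exact Hm|]. intros x y e He u v H.
  assert (HD : forall i, exists d, d ∘ e = pi i ∘ u /\ m i ∘ d = v).
  { intros i. destruct (proj2 (Hs i) x y e He (pi i ∘ u) v) as [d [Dd _]].
    - rewrite compA, Hc. exact H.
    - exists d. exact Dd. }
  destruct (non_dep_dep_functional_choice functional_choice _ _ HD) as [dI HdI].
  destruct (Hu y v dI (fun i => proj2 (HdI i))) as [d [[D1 D2] _]].
  exists d. split; [|exact D1]. apply Hm. rewrite compA, D1. symmetry. exact H.
Qed.

(* [m] is the intersection of all strong monos through which [f] factors; if two maps
   agree on the factor [e], their equalizer is such a strong mono, hence it contains [m]. *)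
Lemma epi_strong_mono_factorization : finitely_well_complete C ->
  forall (a b : C) (f : hom a b), exists (c : C) (e : hom a c) (m : hom c b),
      is_epi e /\ is_strong_mono m /\ f = m ∘ e.
Proof.
  intros [Hfl Hsi] a b f.
  pose (Ix := {c : C & {mm : hom c b & {u : hom a c | is_strong_mono mm /\ mm ∘ u = f}}}).
  pose (bI := fun i : Ix => projT1 i).
  pose (mI := fun i : Ix => projT1 (projT2 i) : hom (bI i) b).
  pose (uI := fun i : Ix => proj1_sig (projT2 (projT2 i)) : hom a (bI i)).
  assert (HmI : forall i, is_strong_mono (mI i)).
  { intros i. exact (proj1 (proj2_sig (projT2 (projT2 i)))). }
  assert (HuI : forall i, mI i ∘ uI i = f).
  { intros i. exact (proj2 (proj2_sig (projT2 (projT2 i)))). }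
  destruct (Hsi Ix b bI mI HmI) as [p [pa [pi Hint]]].
  assert (Hpa := intersection_strong_mono HmI Hint).
  destruct Hint as [Hc Hu].
  destruct (Hu a f uI HuI) as [u0 [[U1 U2] _]].
  exists p, u0, pa. split; [|split; [exact Hpa | symmetry; exact U1]].
  intros z g h H.
  destruct (equalizer_exists Hfl g h) as [E [k [Hk [Hkm Hku]]]].
  assert (Hks := equalizer_strong_mono g h Hk Hkm Hku).
  destruct (Hku a u0 H) as [w Hw].
  assert (Hs : is_strong_mono (pa ∘ k)) by (apply strong_mono_comp; assumption).
  assert (Hf : (pa ∘ k) ∘ w = f) by (rewrite <- compA, Hw; exact U1).
  pose (i0 := existT (fun c : C => {mm : hom c b & {u : hom a c | is_strong_mono mm /\ mm ∘ u = f}})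
                E (existT _ (pa ∘ k) (exist _ w (conj Hs Hf))) : Ix).
  assert (Hi0 : pa ∘ (k ∘ pi i0) = pa ∘ idm p) by (rewrite comp_id, compA; exact (Hc i0)).
  apply (proj1 Hpa) in Hi0.
  rewrite <- (comp_id g), <- (comp_id h), <- Hi0, !compA, Hk. reflexivity.
Qed.

Lemma epi_of_unique_lifting (Hfwc : finitely_well_complete C) {a b : C} (e : hom a b) :
  (forall (x y : C) (m : hom x y), is_strong_mono m -> unique_lifting e m) -> is_epi e.
Proof.
  intros Hl.
  destruct (epi_strong_mono_factorization Hfwc _ _ e) as [c [e' [m [He' [Hm Hfe]]]]].
  assert (Hsq : m ∘ e' = idm b ∘ e) by (rewrite id_comp; symmetry; exact Hfe).
  destruct (Hl _ _ m Hm e' (idm b) Hsq) as [d [[D1 D2] _]].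
  intros z g h H. rewrite Hfe, !compA in H. apply He' in H.
  rewrite <- (comp_id g), <- (comp_id h), <- D2, !compA, H. reflexivity.
Qed.

End Category.

#[export] Instance smcc_is_category (W : SMCC) : is_category W := V_cat W.

Ltac simpl_comp := repeat rewrite <- compA; repeat rewrite id_comp; repeat rewrite comp_id.

(* [rw E] rewrites with an equation [E] between composites wherever its left side
   occurs as a prefix of a right-nested composite. *)
Ltac rw E :=
  simpl_comp;
  first [ rewrite (comp_prefix4 E) | rewrite (comp_prefix3 E)
        | rewrite (comp_prefix2 E) | rewrite E ];
  simpl_comp.
Ltac rwl E := rw (eq_sym E).

Section Monoidal.
Context {W : SMCC}.

Lemma tensm_compose {a a' a'' b b' b'' : W} (f : hom a a') (f' : hom a' a'')
    (g : hom b b') (g' : hom b' b'') :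
  tensm f' g' ∘ tensm f g = tensm (f' ∘ f) (g' ∘ g).
Proof. symmetry; apply tensm_comp. Qed.

Lemma tensm_split_l {a a' b b' : W} (f : hom a a') (g : hom b b') :
  tensm f g = tensm f (idm b') ∘ tensm (idm a) g.
Proof. rewrite tensm_compose, id_comp, comp_id. reflexivity. Qed.

Lemma tensm_split_r {a a' b b' : W} (f : hom a a') (g : hom b b') :
  tensm f g = tensm (idm a') g ∘ tensm f (idm b).
Proof. rewrite tensm_compose, id_comp, comp_id. reflexivity. Qed.

Lemma tensm_comp_l {a a' a'' b : W} (f : hom a a') (f' : hom a' a'') :
  tensm f' (idm b) ∘ tensm f (idm b) = tensm (f' ∘ f) (idm b).
Proof. rewrite tensm_compose, id_comp. reflexivity. Qed.

Lemma tensm_comp_r {a b b' b'' : W} (g : hom b b') (g' : hom b' b'') :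
  tensm (idm a) g' ∘ tensm (idm a) g = tensm (idm a) (g' ∘ g).
Proof. rewrite tensm_compose, id_comp. reflexivity. Qed.

Lemma tensm_interchange {a a' b b' : W} (f : hom a a') (g : hom b b') :
  tensm f (idm b') ∘ tensm (idm a) g = tensm (idm a') g ∘ tensm f (idm b).
Proof. rewrite <- tensm_split_l, <- tensm_split_r. reflexivity. Qed.

Lemma tensm_iso {a a' b b' : W} (f : hom a a') (g : hom b b') :
  is_iso f -> is_iso g -> is_iso (tensm f g).
Proof.
  intros [f' [F1 F2]] [g' [G1 G2]]. exists (tensm f' g').
  rewrite !tensm_compose, F1, F2, G1, G2, !tensm_id. split; reflexivity.
Qed.

Lemma lu_iso (a : W) : is_iso (lu a).
Proof. exists (lu_inv a). exact (conj (lu_inv_l a) (lu_inv_r a)). Qed.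

Lemma ru_iso (a : W) : is_iso (ru a).
Proof. exists (ru_inv a). exact (conj (ru_inv_l a) (ru_inv_r a)). Qed.

Lemma sym_iso (a b : W) : is_iso (sym a b).
Proof. exists (sym b a). exact (conj (sym_invol a b) (sym_invol b a)). Qed.

Lemma lu_inv_nat {a b : W} (f : hom a b) :
  lu_inv b ∘ f = tensm (idm unit) f ∘ lu_inv a.
Proof.
  apply (iso_mono (lu_iso b)).
  rewrite !compA, lu_inv_r, id_comp, <- lu_nat, <- compA, lu_inv_r, comp_id.
  reflexivity.
Qed.

Lemma ru_inv_nat {a b : W} (f : hom a b) :
  ru_inv b ∘ f = tensm f (idm unit) ∘ ru_inv a.
Proof.
  apply (iso_mono (ru_iso b)).
  rewrite !compA, ru_inv_r, id_comp, <- ru_nat, <- compA, ru_inv_r, comp_id.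
  reflexivity.
Qed.

Lemma tensm_unit_l_inj {a b : W} (f g : hom a b) :
  tensm (idm unit) f = tensm (idm unit) g -> f = g.
Proof. intro H. apply (iso_epi (lu_iso a)). rewrite !lu_nat, H. reflexivity. Qed.

Lemma tensm_unit_r_inj {a b : W} (f g : hom a b) :
  tensm f (idm unit) = tensm g (idm unit) -> f = g.
Proof. intro H. apply (iso_epi (ru_iso a)). rewrite !ru_nat, H. reflexivity. Qed.

Lemma lu_asc (a b : W) : lu (tens a b) ∘ asc unit a b = tensm (lu a) (idm b).
Proof.
  apply tensm_unit_l_inj.
  assert (HI : is_iso (asc unit (tens unit a) b ∘ tensm (asc unit unit a) (idm b))).
  { apply iso_comp; [apply tensm_iso; [apply asc_iso | apply id_iso] | apply asc_iso]. }
  apply (iso_epi HI). simpl_comp.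
  rewrite <- tensm_comp_r. simpl_comp.
  assert (P := pentagon unit unit a b). rewrite <- ?compA in P.
  rewrite <- P, (comp_prefix2 (eq_sym (triangle unit (tens a b)))).
  rewrite <- (tensm_id a b), <- asc_nat, (triangle unit a), <- tensm_comp_l. simpl_comp.
  rewrite (comp_prefix2 (asc_nat _ _ _)). simpl_comp. reflexivity.
Qed.

Lemma lu_unit : lu (unit : W) = ru unit.
Proof.
  assert (E1 : tensm (idm unit) (lu (unit : W)) = lu (tens unit unit)).
  { apply (iso_mono (lu_iso unit)). rewrite <- lu_nat. reflexivity. }
  assert (E2 := lu_asc unit unit). rewrite <- E1 in E2.
  assert (T := triangle (unit : W) unit). rewrite E2 in T.
  apply tensm_unit_r_inj. symmetry. exact T.
Qed.

Lemma lu_inv_unit : lu_inv (unit : W) = ru_inv unit.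
Proof. apply (iso_mono (ru_iso unit)). rewrite ru_inv_r, <- lu_unit. apply lu_inv_r. Qed.

Lemma lu_sym (a : W) : lu a ∘ sym a unit = ru a.
Proof.
  apply tensm_unit_r_inj. apply (iso_mono (sym_iso a unit)).
  transitivity (lu (tens unit a) ∘ (tensm (idm unit) (sym a unit)
                  ∘ (asc unit a unit ∘ tensm (sym a unit) (idm unit)))).
  { rewrite (comp_prefix2 (eq_sym (lu_nat _))). rw (lu_asc a unit).
    rewrite tensm_comp_l. reflexivity. }
  assert (H := hexagon a unit unit). rewrite <- ?compA in H. rewrite <- H.
  rw (lu_asc unit a). rewrite (comp_prefix2 (eq_sym (sym_nat (idm a) (lu unit)))).
  assert (T := triangle a unit). rewrite <- ?compA in T. simpl_comp.
  rewrite <- T. reflexivity.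
Qed.

Lemma sym_lu_inv (a : W) : sym unit a ∘ lu_inv a = ru_inv a.
Proof.
  apply (iso_mono (ru_iso a)). rewrite ru_inv_r, <- lu_sym. simpl_comp.
  rewrite (comp_prefix2 (sym_invol unit a)). simpl_comp. apply lu_inv_r.
Qed.

Lemma asc_lu_inv_ru_inv (X : W) :
  asc unit X unit ∘ (ru_inv (tens unit X) ∘ lu_inv X) = lu_inv (tens X unit) ∘ ru_inv X.
Proof.
  apply (iso_mono (lu_iso (tens X unit))).
  rw (lu_asc X unit). rwl (ru_inv_nat (lu X)). rw (lu_inv_r X).
  rw (lu_inv_r (tens X unit)). reflexivity.
Qed.

Lemma asc_lu_inv_lu_inv (X : W) :
  asc unit unit X ∘ (tensm (lu_inv unit) (idm X) ∘ lu_inv X)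
  = lu_inv (tens unit X) ∘ lu_inv X.
Proof.
  apply (iso_mono (lu_iso (tens unit X))).
  rw (lu_asc unit X). rw (tensm_comp_l (lu_inv unit) (lu unit) (b := X)).
  rewrite lu_inv_r, tensm_id. simpl_comp. rw (lu_inv_r (tens unit X)). reflexivity.
Qed.

Lemma asc_ru_inv_ru_inv (X : W) :
  asc X unit unit ∘ (ru_inv (tens X unit) ∘ ru_inv X) = tensm (idm X) (lu_inv unit) ∘ ru_inv X.
Proof.
  apply (iso_mono (tensm_iso (id_iso X) (lu_iso unit))).
  assert (T := triangle X unit). rewrite <- ?compA in T. rewrite (comp_prefix2 (eq_sym T)).
  rw (ru_inv_nat (ru_inv X)). rw (tensm_comp_l (ru_inv X) (ru X) (b := unit)).
  rewrite ru_inv_r, tensm_id. simpl_comp.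
  rewrite (comp_prefix2 (tensm_comp_r _ _)), lu_inv_r, tensm_id. simpl_comp. reflexivity.
Qed.

End Monoidal.

Section UnderlyingCategory.
Variables (W : SMCC) (B : VCat W).

Lemma postcomp_comp (a b1 b2 b3 : B) (d : @hom (B0 B) b1 b2) (m : @hom (B0 B) b2 b3) :
  postcomp B a (m ∘ d) = postcomp B a m ∘ postcomp B a d.
Proof.
  unfold postcomp; simpl.
  rewrite <- !tensm_comp_l. simpl_comp.
  assert (VA := vassoc B a b1 b2 b3). rewrite <- ?compA in VA.
  rw VA. rw (asc_nat m d (idm (vhom B a b1))). rw (asc_lu_inv_lu_inv (vhom B a b1)).
  rw (lu_inv_nat (vcomp B a b1 b2)). rw (lu_inv_nat (tensm d (idm (vhom B a b1)))).
  rewrite (tensm_split_l m). simpl_comp. rw (tensm_interchange m (vcomp B a b1 b2)).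
  reflexivity.
Qed.

Lemma precomp_comp (c' c k a : B) (e : @hom (B0 B) c' c) (d : @hom (B0 B) c k) :
  precomp B e a ∘ precomp B d a = precomp B (d ∘ e) a.
Proof.
  unfold precomp; simpl.
  rw (ru_inv_nat (vcomp B c k a)). rw (ru_inv_nat (tensm (idm (vhom B k a)) d)).
  rwl (tensm_interchange (vcomp B c k a) e).
  rwl (tensm_split_r (tensm (idm (vhom B k a)) d) e).
  assert (VA := vassoc B c' c k a). rewrite <- ?compA in VA.
  rw VA. rw (asc_nat (idm (vhom B k a)) d e). rw (asc_ru_inv_ru_inv (vhom B k a)).
  rewrite <- !tensm_comp_r. simpl_comp. reflexivity.
Qed.

Lemma postcomp_point {a b1 b2 : B} (m : @hom (B0 B) b1 b2) (g : @hom (B0 B) a b1) :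
  postcomp B a m ∘ g = @cmp (B0 B) a b1 b2 m g.
Proof. unfold postcomp; simpl. rw (lu_inv_nat g). rwl (tensm_split_l m g). reflexivity. Qed.

Lemma precomp_point {a1 a2 c : B} (e : @hom (B0 B) a1 a2) (g : @hom (B0 B) a2 c) :
  precomp B e c ∘ g = @cmp (B0 B) a1 a2 c g e.
Proof.
  unfold precomp; simpl. rw (ru_inv_nat g). rwl (tensm_split_r g e).
  rewrite lu_inv_unit. reflexivity.
Qed.

Lemma precomp_postcomp (a1 a2 b1 b2 : B) (e : @hom (B0 B) a1 a2) (m : @hom (B0 B) b1 b2) :
  postcomp B a1 m ∘ precomp B e b1 = precomp B e b2 ∘ postcomp B a2 m.
Proof.
  unfold precomp, postcomp; simpl.
  rw (lu_inv_nat (vcomp B a1 a2 b1)). rw (lu_inv_nat (tensm (idm (vhom B a2 b1)) e)).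
  rw (tensm_interchange m (vcomp B a1 a2 b1)).
  rw (ru_inv_nat (vcomp B a2 b1 b2)). rw (ru_inv_nat (tensm m (idm (vhom B a2 b1)))).
  rwl (tensm_split_r (vcomp B a2 b1 b2) e).
  rewrite (tensm_split_l (vcomp B a2 b1 b2) e). simpl_comp.
  assert (VA := vassoc B a1 a2 b1 b2). rewrite <- ?compA in VA.
  rw VA. rwl (tensm_split_r (tensm m (idm (vhom B a2 b1))) e).
  rw (asc_nat m (idm (vhom B a2 b1)) e). rw (asc_lu_inv_ru_inv (vhom B a2 b1)).
  rwl (tensm_split_l m (tensm (idm (vhom B a2 b1)) e)). reflexivity.
Qed.

Lemma postcomp_id (a b : B) : postcomp B a (@idm (B0 B) b) = idm _.
Proof. unfold postcomp; simpl. rewrite (vunit_l B a b). simpl_comp. apply lu_inv_r. Qed.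

Lemma precomp_id (a c : B) : precomp B (@idm (B0 B) a) c = idm _.
Proof. unfold precomp; simpl. rewrite (vunit_r B a c). simpl_comp. apply ru_inv_r. Qed.

Lemma B0_is_category : is_category (B0 B).
Proof.
  split; [|split].
  - intros a b f. rewrite <- postcomp_point, postcomp_id. exact (id_comp (C := W) f).
  - intros a b f. rewrite <- precomp_point, precomp_id. exact (id_comp (C := W) f).
  - intros a b c d f g h.
    rewrite <- (postcomp_point h (g ∘ f)), <- (postcomp_point g f).
    rewrite <- (postcomp_point (h ∘ g) f), postcomp_comp. simpl_comp. reflexivity.
Qed.

End UnderlyingCategory.

#[export] Instance B0_category (W : SMCC) (B : VCat W) : is_category (B0 B) :=
  B0_is_category B.

Section Transpose.
Context {W : SMCC}.

Definition transpose_point {Z x Y : W} (j : hom Z (ihom x Y)) (d : hom unit Z) : hom x Y :=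
  ev x Y ∘ tensm (j ∘ d) (idm x) ∘ lu_inv x.

Lemma transpose_point_inj {Z x Y : W} {j : hom Z (ihom x Y)} (Hj : is_iso j)
    (d1 d2 : hom unit Z) :
  transpose_point j d1 = transpose_point j d2 -> d1 = d2.
Proof.
  unfold transpose_point. intros H. apply (iso_mono Hj).
  assert (H' : ev x Y ∘ tensm (j ∘ d1) (idm x) = ev x Y ∘ tensm (j ∘ d2) (idm x)).
  { apply (iso_epi (f := lu_inv x)); [|exact H].
    exists (lu x). exact (conj (lu_inv_r x) (lu_inv_l x)). }
  rewrite (curry_uniq _ (j ∘ d1) H'). symmetry. apply curry_uniq. reflexivity.
Qed.

Lemma transpose_point_surj {Z x Y : W} {j : hom Z (ihom x Y)} (Hj : is_iso j)
    (g : hom x Y) :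
  exists d : hom unit Z, transpose_point j d = g.
Proof.
  destruct Hj as [j' [J1 J2]]. exists (j' ∘ curry (g ∘ lu x)). unfold transpose_point.
  simpl_comp. rewrite (compA (curry (g ∘ lu x)) j' j), J2, id_comp.
  rewrite (comp_prefix2 (curry_ev _)). simpl_comp. rewrite lu_inv_r. apply comp_id.
Qed.

End Transpose.

Section TensorsCotensors.
Variables (W : SMCC) (B : VCat W).

Lemma tensor_transpose (x : W) (a t c : B) (eta : hom x (vhom B a t))
    (d : @hom (B0 B) t c) :
  transpose_point (curry (vcomp B a t c ∘ tensm (idm (vhom B t c)) eta)) d
  = postcomp B a d ∘ eta.
Proof.
  unfold transpose_point, postcomp. rewrite <- tensm_comp_l. simpl_comp.
  rewrite (comp_prefix2 (curry_ev _)). simpl_comp.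
  rwl (tensm_split_r d eta). rewrite tensm_split_l. simpl_comp.
  rwl (lu_inv_nat eta). reflexivity.
Qed.

Lemma cotensor_transpose (x : W) (a k c : B) (eps : hom x (vhom B k a))
    (d : @hom (B0 B) c k) :
  transpose_point (curry (vcomp B c k a ∘ sym (vhom B c k) (vhom B k a)
                          ∘ tensm (idm (vhom B c k)) eps)) d
  = precomp B d a ∘ eps.
Proof.
  unfold transpose_point, precomp. rewrite <- tensm_comp_l. simpl_comp.
  rewrite (comp_prefix2 (curry_ev _)). simpl_comp.
  rwl (tensm_split_r d eps). rw (sym_nat d eps). rw (sym_lu_inv x).
  rewrite tensm_split_r. simpl_comp. rwl (ru_inv_nat eps). reflexivity.
Qed.

Section Tensor.
Variables (x : W) (a t : B) (eta : hom x (vhom B a t)).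
Hypothesis Ht : is_tensor B x a t eta.

Lemma tensor_inj {c : B} (d1 d2 : @hom (B0 B) t c) :
  postcomp B a d1 ∘ eta = postcomp B a d2 ∘ eta -> d1 = d2.
Proof. intros H. rewrite <- !tensor_transpose in H. exact (transpose_point_inj (Ht c) _ _ H). Qed.

Lemma tensor_surj {c : B} (g : hom x (vhom B a c)) :
  exists d : @hom (B0 B) t c, postcomp B a d ∘ eta = g.
Proof.
  destruct (transpose_point_surj (Ht c) g) as [d Hd].
  exists d. rewrite <- tensor_transpose. exact Hd.
Qed.

End Tensor.

Section Cotensor.
Variables (x : W) (a k : B) (eps : hom x (vhom B k a)).
Hypothesis Hk : is_cotensor B x a k eps.

Lemma cotensor_inj {c : B} (d1 d2 : @hom (B0 B) c k) :
  precomp B d1 a ∘ eps = precomp B d2 a ∘ eps -> d1 = d2.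
Proof.
  intros H. rewrite <- !cotensor_transpose in H. exact (transpose_point_inj (Hk c) _ _ H).
Qed.

Lemma cotensor_surj {c : B} (g : hom x (vhom B c a)) :
  exists d : @hom (B0 B) c k, precomp B d a ∘ eps = g.
Proof.
  destruct (transpose_point_surj (Hk c) g) as [d Hd].
  exists d. rewrite <- cotensor_transpose. exact Hd.
Qed.

End Cotensor.

End TensorsCotensors.

Section EnrichedClasses.
Variables (W : SMCC) (B : VCat W).

Lemma VEpi_iff_epi (Hcot : cotensored B) {a1 a2 : B} (e : @hom (B0 B) a1 a2) :
  VEpi B a1 a2 e <-> is_epi e.
Proof.
  split.
  - intros He z g h H. rewrite <- !precomp_point in H. exact (He z _ g h H).
  - intros He c z g h H. destruct (Hcot z c) as [k [eps Hk]].
    destruct (cotensor_surj Hk g) as [d1 E1]. destruct (cotensor_surj Hk h) as [d2 E2].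
    subst g h. rewrite !compA, !precomp_comp in H.
    apply (cotensor_inj Hk) in H. apply He in H. subst. reflexivity.
Qed.

Lemma VMono_iff_mono (Htens : tensored B) {b1 b2 : B} (m : @hom (B0 B) b1 b2) :
  VMono B b1 b2 m <-> is_mono m.
Proof.
  split.
  - intros Hm z g h H. rewrite <- !postcomp_point in H. exact (Hm z _ g h H).
  - intros Hm a z g h H. destruct (Htens z a) as [t [eta Ht]].
    destruct (tensor_surj Ht g) as [d1 E1]. destruct (tensor_surj Ht h) as [d2 E2].
    subst g h. rewrite !compA, <- !postcomp_comp in H.
    apply (tensor_inj Ht) in H. apply Hm in H. subst. reflexivity.
Qed.

Lemma unique_lifting_of_orthV {a1 a2 b1 b2 : B} (e : @hom (B0 B) a1 a2)
    (m : @hom (B0 B) b1 b2) :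
  orthV B e m -> unique_lifting e m.
Proof.
  intros [_ Hpb] u v H.
  assert (H' : precomp B e b2 ∘ v = postcomp B a1 m ∘ u).
  { rewrite postcomp_point, precomp_point. symmetry. exact H. }
  destruct (Hpb _ v u H') as [w [[Hw1 Hw2] Hw]].
  exists w. rewrite postcomp_point in Hw1. rewrite precomp_point in Hw2.
  split; [split; assumption|].
  intros d [D1 D2]. apply Hw. rewrite postcomp_point, precomp_point. split; assumption.
Qed.

(* A cone of the square [e ↓_V m] with vertex [Q] is, after transposing along the tensors
   [Q ⊗ a1] and [Q ⊗ a2], a commutative square from [k = Q ⊗ e] to [m] in [B0]; [k] is
   epi because [e] is a V-epi, so the square has a diagonal. *)
Lemma orthV_of_strong_mono (Htens : tensored B) {a1 a2 b1 b2 : B}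
    (e : @hom (B0 B) a1 a2) (m : @hom (B0 B) b1 b2) :
  VEpi B a1 a2 e -> is_strong_mono m -> orthV B e m.
Proof.
  intros He [Hm Hl]. split; [symmetry; apply precomp_postcomp|].
  intros Q q1 q2 Hq.
  destruct (Htens Q a2) as [t2 [eta2 Ht2]]. destruct (Htens Q a1) as [t1 [eta1 Ht1]].
  destruct (tensor_surj Ht2 q1) as [d1 E1]. destruct (tensor_surj Ht1 q2) as [d2 E2].
  destruct (tensor_surj Ht1 (precomp B e t2 ∘ eta2)) as [k Ek].
  assert (Hkey : forall z (x : @hom (B0 B) t2 z),
     postcomp B a1 (x ∘ k) ∘ eta1 = precomp B e z ∘ (postcomp B a2 x ∘ eta2)).
  { intros z x. rewrite postcomp_comp, <- compA, Ek, compA, precomp_postcomp, <- compA.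
    reflexivity. }
  assert (Hk : is_epi k).
  { intros z x y Hxy. apply (tensor_inj Ht2). apply (He z).
    rewrite <- !Hkey, Hxy. reflexivity. }
  assert (Hsq : m ∘ d2 = d1 ∘ k).
  { apply (tensor_inj Ht1). rewrite Hkey, E1, postcomp_comp, <- compA, E2.
    symmetry. exact Hq. }
  destruct (Hl _ _ k Hk d2 d1 Hsq) as [d [[D1 D2] _]].
  exists (postcomp B a2 d ∘ eta2). split.
  - split.
    + rewrite compA, <- postcomp_comp, D2. exact E1.
    + rewrite <- Hkey, D1. exact E2.
  - intros u' [U1 _]. apply (proj2 (VMono_iff_mono Htens m) Hm a2).
    rewrite U1, compA, <- postcomp_comp, D2. exact E1.
Qed.

Lemma VStrMono_iff_strong_mono (Htens : tensored B) (Hcot : cotensored B)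
    {b1 b2 : B} (m : @hom (B0 B) b1 b2) :
  VStrMono B b1 b2 m <-> is_strong_mono m.
Proof.
  split.
  - intros [Hv Ho]. apply strong_mono_intro; [exact (proj1 (VMono_iff_mono Htens m) Hv)|].
    intros x y e He u v H.
    destruct (unique_lifting_of_orthV (Ho x y e (proj2 (VEpi_iff_epi Hcot e) He)) u v H)
      as [d [Dd _]].
    exists d. exact Dd.
  - intros Hs. split; [exact (proj2 (VMono_iff_mono Htens m) (proj1 Hs))|].
    intros a1 a2 e He. exact (orthV_of_strong_mono Htens He Hs).
Qed.

Lemma VStrMono_of_orthV (Htens : tensored B) (Hcot : cotensored B)
    (Hpb : has_pullbacks (B0 B)) {b1 b2 : B} (m : @hom (B0 B) b1 b2) :
  (forall (a1 a2 : B) (e : @hom (B0 B) a1 a2), VEpi B a1 a2 e -> orthV B e m) ->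
  VStrMono B b1 b2 m.
Proof.
  intros Ho. split; [|exact Ho]. apply (VMono_iff_mono Htens).
  apply (mono_of_unique_lifting Hpb). intros x y e He.
  apply unique_lifting_of_orthV, Ho, (VEpi_iff_epi Hcot). exact He.
Qed.

Lemma VEpi_of_orthV (Htens : tensored B) (Hcot : cotensored B)
    (Hfwc : finitely_well_complete (B0 B)) {a1 a2 : B} (e : @hom (B0 B) a1 a2) :
  (forall (b1 b2 : B) (m : @hom (B0 B) b1 b2), VStrMono B b1 b2 m -> orthV B e m) ->
  VEpi B a1 a2 e.
Proof.
  intros Ho. apply (VEpi_iff_epi Hcot), (epi_of_unique_lifting Hfwc).
  intros x y m Hm. apply unique_lifting_of_orthV, Ho, (VStrMono_iff_strong_mono Htens Hcot).
  exact Hm.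
Qed.

End EnrichedClasses.

Theorem corollary7p6 (W : SMCC) (B : VCat W)
  (Htens : tensored B) (Hcot : cotensored B)
  (Hfwc : finitely_well_complete (B0 B)) :
  (forall (a b : vob B) (f : @hom (B0 B) a b), @VEpi W B a b f <-> @Epi0 W B a b f) /\
  (forall (a b : vob B) (f : @hom (B0 B) a b), @VStrMono W B a b f <-> @StrMono0 W B a b f) /\
  VFactSystem (@VEpi W B) (@VStrMono W B).
Proof.
  assert (HEpi : forall a b (f : @hom (B0 B) a b), VEpi B a b f <-> Epi0 B a b f).
  { intros a b f. exact (VEpi_iff_epi Hcot f). }
  assert (HStr : forall a b (f : @hom (B0 B) a b), VStrMono B a b f <-> StrMono0 B a b f).
  { intros a b f. exact (VStrMono_iff_strong_mono Htens Hcot f). }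
  split; [exact HEpi|]. split; [exact HStr|]. split; [|split].
  - intros b1 b2 m. split; [intros [_ Ho]; exact Ho|].
    apply (VStrMono_of_orthV Htens Hcot (proj2 (proj1 Hfwc))).
  - intros a1 a2 e. split; [intros He b1 b2 m [_ Ho]; exact (Ho _ _ e He)|].
    apply (VEpi_of_orthV Htens Hcot Hfwc).
  - intros a b f.
    destruct (epi_strong_mono_factorization Hfwc _ _ f) as [c [e [m [He [Hm Hf]]]]].
    exists c, e, m. split; [apply HEpi; exact He|]. split; [apply HStr; exact Hm|exact Hf].
Qed.
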